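(* Suppose $F$ satisfies Assumption A1, $F\in MDA(\Lambda)$, Assumption A3, and $x_F=\infty$. For a threshold $a$ set $\beta=\bar F(a)$, $\eta=f(a)$, $\nu=-f'(a)$. Fix $x$ with $1/2<x\le1$ and let $p=p(a)$ satisfy $1-p=x\beta$. Let $q=F^{-1}(p)$ be the true $p$-quantile and $q^*$ the optimal value of $$\sup_{q'\ge a,\,g}\ q'\ \text{ s.t. }(1-\beta)+\int_a^{q'}g=p,\ \int_a^\infty g=\beta,\ g(a)=g(a+)=\eta,\ g'_+(a)\ge-\nu,\ g\text{ convex and }\ge0\text{ on }[a,\infty).$$ Then $\lim_{a\to\infty}q^*/q=1$.
   Context: $X$ is a continuous random variable with distribution function $F$, density $f$, $\bar F=1-F$, right endpoint $x_F=\sup\{x:F(x)<1\}$. $\Lambda(x)=\exp\{-e^{-x}\}$. $F\in MDA(\Lambda)$ means there exist $c_n>0$, $d_n$ with $c_n^{-1}(M_n-d_n)$ converging in distribution to $\Lambda$, $M_n$ the maximum of $n$ i.i.d. copies of $X$. Assumption A1: there exists $z<x_F$ such that on $(z,x_F)$, $F$ is twice differentiable and $f$ is positive, decreasing and convex. Assumption A3: $\lim_{x\uparrow x_F}\bar F(x)f'(x)/f(x)^2=-1$. $g(a+)$ is the right limit and $g'_+$ the right derivative. *)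

From Stdlib Require Import Reals.
From Coquelicot Require Import Coquelicot.
Open Scope R_scope.

Definition Lambda (x : R) : R := exp (- exp (- x)).

Definition is_continuous_cdf (F : R -> R) : Prop :=
  (forall x y, x <= y -> F x <= F y) /\
  (forall x, continuous F x) /\
  filterlim F (Rbar_locally m_infty) (locally 0) /\
  filterlim F (Rbar_locally p_infty) (locally 1).

Definition right_endpoint_infinite (F : R -> R) : Prop := forall x, F x < 1.

Definition assumption_A1 (F f fd : R -> R) : Prop :=
  exists z : R,
    (forall x, z < x -> is_derive F x (f x)) /\
    (forall x, z < x -> is_derive f x (fd x)) /\
    (forall x, z < x -> 0 < f x) /\
    (forall x y, z < x -> x <= y -> f y <= f x) /\
    (forall x y t, z < x -> z < y -> 0 <= t <= 1 ->
        f (t * x + (1 - t) * y) <= t * f x + (1 - t) * f y).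

(* F in MDA(Lambda): c_n^{-1}(M_n - d_n) converges in distribution to Lambda,
   i.e. F(c_n x + d_n)^n -> Lambda(x) for every x (Lambda is continuous). *)
Definition in_MDA_Gumbel (F : R -> R) : Prop :=
  exists c d : nat -> R, (forall n, 0 < c n) /\
    forall x, is_lim_seq (fun n => (F (c n * x + d n)) ^ n) (Lambda x).

Definition assumption_A3 (F f fd : R -> R) : Prop :=
  is_lim (fun x => (1 - F x) * fd x / (f x ^ 2)) p_infty (-1).

Definition quantile (F : R -> R) (p : R) : R :=
  real (Glb_Rbar (fun y => p <= F y)).

Definition convex_on_from (g : R -> R) (a : R) : Prop :=
  forall u v t, a <= u -> a <= v -> 0 <= t <= 1 ->
    g (t * u + (1 - t) * v) <= t * g u + (1 - t) * g v.

Definition feasible (a beta eta nu p q' : R) : Prop :=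
  a <= q' /\
  exists g : R -> R,
    is_RInt g a q' (p - (1 - beta)) /\
    is_RInt_gen g (at_point a) (Rbar_locally p_infty) beta /\
    g a = eta /\
    filterlim g (at_right a) (locally eta) /\
    (exists L : Rbar,
        filterlim (fun h => (g (a + h) - g a) / h) (at_right 0) (Rbar_locally L) /\
        Rbar_le (Finite (- nu)) L) /\
    convex_on_from g a /\
    (forall y, a <= y -> 0 <= g y).

(* optimal value q* (in the extended reals; sup of empty set is -oo) *)
Definition qstar (a beta eta nu p : R) : Rbar :=
  Lub_Rbar (feasible a beta eta nu p).

From Stdlib Require Import Reals Lra.
From Coquelicot Require Import Coquelicot.
Open Scope R_scope.

(* Write beta = Fbar(a), eta = f(a), nu = -f'(a) and u = beta/eta.  Any feasible
   g lies above its right tangent line eta - nu (t - a), so an interval [a, q']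
   carrying mass (1 - x) beta has length at most 2 (1 - x) beta / eta <= u, as
   long as 2 (1 - x) beta nu < eta^2.  Conversely the true density f is feasible
   and reaches the level p within [a, a + u] by its own tangent bound.  Hence q*
   and q both lie in [a, a + u].  Assumption A3 says that beta nu / eta^2 -> 1
   (which makes the condition above hold when x > 1/2) and that the derivative
   of the Mills ratio u(a) tends to 0, so u = o(a) and q*/q -> 1. *)

Lemma continuity_pt_of_is_derive (g : R -> R) t l :
  is_derive g t l -> continuity_pt g t.
Proof.
  intros H. apply continuity_pt_filterlim.
  apply (@ex_derive_continuous R_AbsRing R_NormedModule). now exists l.
Qed.

Lemma MVT_interval (g g' : R -> R) u v : u <= v ->
  (forall t, u <= t <= v -> is_derive g t (g' t)) ->
  exists c, u <= c <= v /\ g v - g u = g' c * (v - u).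
Proof.
  intros Huv Hd.
  destruct (MVT_gen g u v g') as [c [Hc Hm]]; rewrite Rmin_left, Rmax_right in * by lra.
  - intros t Ht. apply Hd. lra.
  - intros t Ht. apply continuity_pt_of_is_derive with (g' t). now apply Hd.
  - now exists c.
Qed.

Lemma is_derive_right_quotient (g : R -> R) a l : is_derive g a l ->
  filterlim (fun h => (g (a + h) - g a) / h) (at_right 0) (locally l).
Proof.
  intros H. apply is_derive_Reals in H.
  apply filterlim_locally. intros eps.
  destruct (H eps (cond_pos eps)) as [d Hd].
  exists d. intros y Hy Hy0.
  change (Rabs (y - 0) < d) in Hy. rewrite Rminus_0_r in Hy.
  apply Hd; lra.
Qed.

Lemma is_RInt_affine a eta nu c :
  is_RInt (fun t => eta - nu * (t - a)) a c (eta * (c - a) - nu * (c - a) ^ 2 / 2).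
Proof.
  set (P := fun t => eta * (t - a) - nu * (t - a) ^ 2 / 2).
  replace (eta * (c - a) - nu * (c - a) ^ 2 / 2) with (minus (P c) (P a))
    by (unfold P, minus, plus, opp; simpl; field).
  apply (is_RInt_derive P).
  - intros y _. unfold P. auto_derive; auto. field.
  - intros y _. apply (@ex_derive_continuous R_AbsRing R_NormedModule). auto_derive; auto.
Qed.

Section ConvexFromPoint.

Variables (g : R -> R) (a : R).
Hypothesis g_convex : convex_on_from g a.

Lemma convex_slope_le h t : 0 < h -> h <= t - a ->
  (g (a + h) - g a) / h <= (g t - g a) / (t - a).
Proof.
  intros Hh Ht.
  set (l := h / (t - a)).
  assert (Hl : 0 <= l <= 1).
  { unfold l; split.
    - apply Rlt_le, Rdiv_lt_0_compat; lra.
    - apply Rmult_le_reg_r with (t - a); [lra|]. unfold Rdiv. rewrite Rmult_assoc, Rinv_l; lra. }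
  assert (Hconv := g_convex t a l ltac:(lra) ltac:(lra) Hl).
  replace (l * t + (1 - l) * a) with (a + h) in Hconv by (unfold l; field; lra).
  apply Rmult_le_reg_r with h; [lra|].
  replace ((g (a + h) - g a) / h * h) with (g (a + h) - g a) by (field; lra).
  replace ((g t - g a) / (t - a) * h) with (l * (g t - g a)) by (unfold l; field; lra).
  lra.
Qed.

Lemma convex_right_slope_le L :
  filterlim (fun h => (g (a + h) - g a) / h) (at_right 0) (Rbar_locally L) ->
  forall t, a < t -> Rbar_le L ((g t - g a) / (t - a)).
Proof.
  intros Hlim t Ht.
  destruct (Rbar_le_lt_dec L ((g t - g a) / (t - a))) as [H|H]; [exact H|exfalso].
  destruct (Hlim _ (open_Rbar_gt' _ _ H)) as [eps Heps].
  set (h := Rmin (eps / 2) (t - a)).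
  assert (Hh : 0 < h) by (apply Rmin_pos; [destruct eps; simpl; lra | lra]).
  assert (Hball : ball 0 eps h).
  { change (Rabs (h - 0) < eps). rewrite Rminus_0_r, Rabs_right by lra.
    assert (h <= eps / 2) by apply Rmin_l. destruct eps; simpl in *; lra. }
  specialize (Heps h Hball Hh). simpl in Heps.
  assert (Hslope := convex_slope_le h t Hh (Rmin_r _ _)). lra.
Qed.

Lemma convex_ge_right_tangent nu L :
  filterlim (fun h => (g (a + h) - g a) / h) (at_right 0) (Rbar_locally L) ->
  Rbar_le (Finite (- nu)) L -> forall t, a <= t -> g a - nu * (t - a) <= g t.
Proof.
  intros Hlim HL t Ht.
  destruct (Req_dec t a) as [->|Hne]; [lra|].
  assert (Hs := Rbar_le_trans _ _ _ HL (convex_right_slope_le L Hlim t ltac:(lra))).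
  simpl in Hs.
  assert (H : - nu * (t - a) <= (g t - g a) / (t - a) * (t - a))
    by (apply Rmult_le_compat_r; lra).
  replace ((g t - g a) / (t - a) * (t - a)) with (g t - g a) in H by (field; lra).
  lra.
Qed.

End ConvexFromPoint.

Lemma is_RInt_ge_line_area g a b V eta nu :
  is_RInt g a b V -> (forall t, a <= t <= b -> 0 <= g t) ->
  (forall t, a <= t <= b -> eta - nu * (t - a) <= g t) ->
  forall c, a <= c <= b -> eta * (c - a) - nu * (c - a) ^ 2 / 2 <= V.
Proof.
  intros HI Hpos Hline c Hc.
  assert (Hex : ex_RInt g a b) by (now exists V).
  assert (E1 : ex_RInt g a c) by (apply (ex_RInt_Chasles_1 g a c b); [lra|auto]).
  assert (E2 : ex_RInt g c b) by (apply (ex_RInt_Chasles_2 g a c b); [lra|auto]).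
  assert (Hsplit := RInt_Chasles g a c b E1 E2).
  rewrite (is_RInt_unique _ _ _ _ HI) in Hsplit. unfold plus in Hsplit; simpl in Hsplit.
  assert (Htail : 0 <= RInt g c b)
    by (apply RInt_ge_0; [lra | auto | intros; apply Hpos; lra]).
  assert (Hhead : RInt (fun t => eta - nu * (t - a)) a c <= RInt g a c).
  { apply RInt_le; [lra | eexists; apply is_RInt_affine | auto |].
    intros t Ht. apply Hline. lra. }
  rewrite (is_RInt_unique _ _ _ _ (is_RInt_affine a eta nu c)) in Hhead.
  lra.
Qed.

Lemma quadratic_area_bound eta nu V s : 0 < eta -> 0 < nu -> 2 * V * nu < eta ^ 2 ->
  0 <= s -> (forall c, 0 <= c <= s -> eta * c - nu * c ^ 2 / 2 <= V) ->
  s <= 2 * V / eta.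
Proof.
  intros He Hn HV Hs Harea.
  destruct (Rle_dec s (eta / nu)) as [Hle|Hgt].
  - (* below the vertex the quadratic is at least half the linear term *)
    assert (nu * s <= eta).
    { apply Rmult_le_compat_l with (r := nu) in Hle; [|lra].
      replace (nu * (eta / nu)) with eta in Hle by (field; lra). lra. }
    assert (eta * s / 2 <= V) by (specialize (Harea s ltac:(lra)); nra).
    apply Rmult_le_reg_r with eta; [lra|].
    replace (2 * V / eta * eta) with (2 * V) by (field; lra). lra.
  - exfalso.
    assert (Hvertex := Harea (eta / nu) ltac:(split; [apply Rlt_le, Rdiv_lt_0_compat|]; lra)).
    replace (eta * (eta / nu) - nu * (eta / nu) ^ 2 / 2) with (eta ^ 2 / (2 * nu))
      in Hvertex by (field; lra).
    apply Rmult_le_compat_r with (r := 2 * nu) in Hvertex; [|lra].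
    replace (eta ^ 2 / (2 * nu) * (2 * nu)) with (eta ^ 2) in Hvertex by (field; lra).
    lra.
Qed.

Lemma feasible_le a beta eta nu p q' : 0 < eta -> 0 < nu ->
  2 * (p - (1 - beta)) * nu < eta ^ 2 ->
  feasible a beta eta nu p q' -> q' - a <= 2 * (p - (1 - beta)) / eta.
Proof.
  intros He Hn HV [Hq [g [HI [_ [Hga [_ [[L [Hlim HL]] [Hconv Hpos]]]]]]]].
  assert (Hline := convex_ge_right_tangent g a Hconv nu L Hlim HL). rewrite Hga in Hline.
  apply quadratic_area_bound with nu; auto; [lra|].
  intros c Hc.
  replace c with (a + c - a) by ring.
  apply (is_RInt_ge_line_area g a q'); auto; [intros; apply Hpos | intros; apply Hline | ]; lra.
Qed.

Lemma feasible_le_threshold a beta eta nu x q' : 1 / 2 < x <= 1 ->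
  0 < beta -> 0 < eta -> 0 < nu -> beta * nu < (x + 1 / 2) * eta ^ 2 ->
  feasible a beta eta nu (1 - x * beta) q' -> q' <= a + beta / eta.
Proof.
  intros Hx Hb He Hn Hk Hfeas.
  assert (Hcond : 2 * ((1 - x) * beta) * nu < eta ^ 2).
  { assert (0 < eta ^ 2) by (apply pow_lt; lra).
    assert (2 * (1 - x) * (beta * nu) <= 2 * (1 - x) * ((x + 1 / 2) * eta ^ 2))
      by (apply Rmult_le_compat_l; lra).
    assert (2 * (1 - x) * (x + 1 / 2) < 1) by nra.
    nra. }
  assert (H := feasible_le a beta eta nu (1 - x * beta) q' He Hn).
  replace (1 - x * beta - (1 - beta)) with ((1 - x) * beta) in H by ring.
  specialize (H Hcond Hfeas).
  assert (2 * ((1 - x) * beta) / eta <= beta / eta).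
  { unfold Rdiv. apply Rmult_le_compat_r; [apply Rlt_le, Rinv_0_lt_compat | nra]; lra. }
  lra.
Qed.

Lemma increment_le_of_derive_le (u u' : R -> R) a0 e y : a0 <= y ->
  (forall t, a0 <= t <= y -> is_derive u t (u' t)) ->
  (forall t, a0 <= t <= y -> u' t <= e) ->
  u y - u a0 <= e * (y - a0).
Proof.
  intros Hy Hd Hle.
  destruct (MVT_interval u u' a0 y Hy Hd) as [c [Hc ->]].
  apply Rmult_le_compat_r; [lra | now apply Hle].
Qed.

Lemma eventually_le_linear (u u' : R -> R) e : 0 < e ->
  (exists a0, forall t, a0 <= t -> is_derive u t (u' t) /\ u' t <= e / 2) ->
  exists M, forall y, M < y -> u y <= e * y.
Proof.
  intros He [a0 Ha0].
  set (a1 := Rmax a0 0).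
  assert (Ha1 : a0 <= a1 /\ 0 <= a1) by (split; [apply Rmax_l | apply Rmax_r]).
  exists (Rmax a1 (2 * Rabs (u a1) / e)).
  intros y [Hy1 Hy2]%Rmax_Rlt.
  assert (Hinc : u y - u a1 <= e / 2 * (y - a1)).
  { apply increment_le_of_derive_le with u'; [lra | |]; intros t Ht; apply Ha0; lra. }
  assert (2 * Rabs (u a1) <= e * y).
  { replace (2 * Rabs (u a1)) with (2 * Rabs (u a1) / e * e) by (field; lra).
    rewrite (Rmult_comm e y). apply Rmult_le_compat_r; lra. }
  assert (u a1 <= Rabs (u a1)) by apply Rle_abs.
  assert (0 <= e / 2 * a1) by (apply Rmult_le_pos; lra).
  lra.
Qed.

Lemma is_derive_mills_ratio (F f fd : R -> R) (y : R) :
  is_derive F y (f y) -> is_derive f y (fd y) -> f y <> 0 ->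
  is_derive (fun t => (1 - F t) / f t) y (-1 - (1 - F y) * fd y / f y ^ 2).
Proof.
  intros HF Hf Hne.
  assert (H1 : is_derive (fun t => 1 - F t) y (- f y)).
  { replace (- f y) with (minus 0 (f y)) by (unfold minus, plus, opp; simpl; ring).
    apply (@is_derive_minus R_AbsRing R_NormedModule); [|exact HF].
    exact (@is_derive_const R_AbsRing R_NormedModule 1 y). }
  replace (-1 - (1 - F y) * fd y / f y ^ 2)
    with ((- f y * f y - (1 - F y) * fd y) / f y ^ 2) by (field; exact Hne).
  exact (is_derive_div _ _ _ _ _ H1 Hf Hne).
Qed.

Lemma Lub_Rbar_bracket (P : R -> Prop) lo hi :
  (exists y, P y /\ lo <= y) -> (forall y, P y -> y <= hi) ->
  exists r, Lub_Rbar P = Finite r /\ lo <= r <= hi.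
Proof.
  intros [y [Py Hy]] Hub.
  destruct (Lub_Rbar_correct P) as [Hupper Hleast].
  assert (H1 := Hupper y Py).
  assert (H2 := Hleast (Finite hi) Hub).
  destruct (Lub_Rbar P) as [r | |]; simpl in H1, H2; try tauto.
  exists r. split; [reflexivity | lra].
Qed.

Lemma Glb_Rbar_bracket (P : R -> Prop) lo hi :
  P hi -> (forall y, P y -> lo <= y) -> lo <= real (Glb_Rbar P) <= hi.
Proof.
  intros Phi Hlb.
  destruct (Glb_Rbar_correct P) as [Hlower Hgreatest].
  assert (H1 := Hlower hi Phi).
  assert (H2 := Hgreatest (Finite lo) Hlb).
  destruct (Glb_Rbar P) as [q | |]; simpl in *; tauto.
Qed.

Lemma ratio_near_one a u r q e : 0 < a -> 0 < e -> u <= e / 2 * a ->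
  a <= r <= a + u -> a <= q <= a + u -> Rabs (r / q - 1) < e.
Proof.
  intros Ha He Hu Hr Hq.
  replace (r / q - 1) with ((r - q) / q) by (field; lra).
  unfold Rdiv. rewrite Rabs_mult, Rabs_inv, (Rabs_right q) by lra.
  apply Rmult_lt_reg_r with q; [lra|].
  rewrite Rmult_assoc, Rinv_l, Rmult_1_r by lra.
  assert (e / 2 * a <= e / 2 * q) by (apply Rmult_le_compat_l; lra).
  apply Rabs_lt_between. nra.
Qed.

Section SmoothTail.

Variables (F f fd : R -> R) (z : R).
Hypothesis F_deriv : forall y, z < y -> is_derive F y (f y).
Hypothesis f_deriv : forall y, z < y -> is_derive f y (fd y).
Hypothesis f_pos : forall y, z < y -> 0 < f y.
Hypothesis f_convex : forall u v t, z < u -> z < v -> 0 <= t <= 1 ->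
  f (t * u + (1 - t) * v) <= t * f u + (1 - t) * f v.
Hypothesis F_cdf : is_continuous_cdf F.

Lemma mills_ratio_sublinear : assumption_A3 F f fd ->
  forall e, 0 < e -> exists M, forall y, M < y -> (1 - F y) / f y <= e * y.
Proof.
  intros HA3 e He.
  apply (eventually_le_linear _ (fun t => -1 - (1 - F t) * fd t / f t ^ 2) e He).
  apply is_lim_spec in HA3.
  destruct (HA3 (mkposreal (e / 2) ltac:(lra))) as [M HM].
  exists (Rmax M z + 1). intros t Ht.
  assert (Hlt : Rmax M z < t) by lra. apply Rmax_Rlt in Hlt as [HMt Hzt].
  split.
  - apply is_derive_mills_ratio; auto. apply Rgt_not_eq, f_pos, Hzt.
  - specialize (HM t HMt). apply Rabs_lt_between in HM. cbn [pos] in HM. lra.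
Qed.

Lemma is_RInt_density a b : z < a -> z < b -> is_RInt f a b (F b - F a).
Proof.
  intros Ha Hb.
  assert (Hin : forall y, Rmin a b <= y <= Rmax a b -> z < y).
  { intros y Hy. destruct (Rle_dec a b).
    - rewrite Rmin_left in Hy by lra. lra.
    - rewrite Rmin_right in Hy by lra. lra. }
  apply (@is_RInt_derive R_CompleteNormedModule F f); intros y Hy.
  - apply F_deriv, Hin, Hy.
  - apply (@ex_derive_continuous R_AbsRing R_NormedModule). exists (fd y).
    apply f_deriv, Hin, Hy.
Qed.

Lemma is_RInt_gen_density_tail a : z < a ->
  is_RInt_gen f (at_point a) (Rbar_locally p_infty) (1 - F a).
Proof.
  intros Ha. destruct F_cdf as [_ [_ [_ HF1]]].
  apply (@filterlimi_lim_ext_loc _ _ _ (locally (1 - F a)) _ (fun ab => F (snd ab) - F a)).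
  - apply Filter_prod with (fun u => u = a) (fun v => z < v).
    + reflexivity.
    + now exists z.
    + intros u v -> Hv. now apply is_RInt_density.
  - apply (filterlim_comp _ _ _ snd (fun v => F v - F a) _ (Rbar_locally p_infty));
      [apply filterlim_snd|].
    apply (is_lim_minus F (fun _ => F a) p_infty 1 (F a) (1 - F a));
      [exact HF1 | apply is_lim_const | reflexivity].
Qed.

Lemma density_feasible a b : z < a -> a <= b ->
  feasible a (1 - F a) (f a) (- fd a) (F b) b.
Proof.
  intros Ha Hab.
  split; [exact Hab|]. exists f.
  split; [replace (F b - (1 - (1 - F a))) with (F b - F a) by ring;
          apply is_RInt_density; lra|].
  split; [now apply is_RInt_gen_density_tail|].
  split; [reflexivity|].
  split.
  { apply (filterlim_filter_le_1 (F := locally a)); [apply filter_le_within|].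
    apply (@ex_derive_continuous R_AbsRing R_NormedModule). exists (fd a). now apply f_deriv. }
  split.
  { exists (Finite (fd a)). split; [|simpl; lra].
    apply is_derive_right_quotient, f_deriv, Ha. }
  split.
  - intros u v t Hu Hv Ht. apply f_convex; lra.
  - intros y Hy. apply Rlt_le, f_pos. lra.
Qed.

Lemma cdf_ge_taylor a d : z < a -> 0 <= d ->
  F a + f a * d + fd a * d ^ 2 / 2 <= F (a + d).
Proof.
  intros Ha Hd.
  set (G := fun t => F t - (f a * (t - a) + fd a * (t - a) ^ 2 / 2)).
  assert (HG : forall t, a <= t <= a + d -> is_derive G t (f t - (f a + fd a * (t - a)))).
  { intros t Ht. apply (@is_derive_minus R_AbsRing R_NormedModule); [apply F_deriv; lra|].
    auto_derive; auto. field. }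
  destruct (MVT_interval G _ a (a + d) ltac:(lra) HG) as [c [Hc Hinc]].
  assert (Htangent : f a + fd a * (c - a) <= f c).
  { assert (H := convex_ge_right_tangent f a
      ltac:(intros u v t Hu Hv Ht; apply f_convex; lra) (- fd a) (Finite (fd a))
      (is_derive_right_quotient f a (fd a) (f_deriv a Ha)) ltac:(simpl; lra) c ltac:(lra)).
    lra. }
  assert (0 <= G (a + d) - G a) by (rewrite Hinc; apply Rmult_le_pos; lra).
  unfold G in *. replace (a + d - a) with d in * by ring.
  replace (a - a) with 0 in * by ring. simpl in *. lra.
Qed.

Lemma cdf_lt a b : z < a -> a < b -> F a < F b.
Proof.
  intros Ha Hab.
  destruct (MVT_interval F f a b ltac:(lra)) as [c [Hc Hinc]].
  - intros t Ht. apply F_deriv. lra.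
  - assert (0 < f c) by (apply f_pos; lra).
    assert (0 < f c * (b - a)) by (apply Rmult_lt_0_compat; lra). lra.
Qed.

Section Threshold.

Variables (x a : R).
Hypothesis x_range : 1 / 2 < x <= 1.
Hypothesis a_gt : z < a.
Hypothesis tail_pos : 0 < 1 - F a.
Hypothesis slope_neg : 0 < - fd a.
Hypothesis hazard_bound : (1 - F a) * (- fd a) < (x + 1 / 2) * f a ^ 2.

Let beta := 1 - F a.
Let u := (1 - F a) / f a.
Let p := 1 - x * beta.

Lemma cdf_ge_level : p <= F (a + u).
Proof.
  assert (He := f_pos a a_gt).
  assert (H := cdf_ge_taylor a u a_gt ltac:(apply Rlt_le, Rdiv_lt_0_compat; lra)).
  replace (F a + f a * u + fd a * u ^ 2 / 2)
    with (1 - beta * ((1 - F a) * (- fd a) / (2 * f a ^ 2))) in H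
    by (unfold u, beta; field; lra).
  assert ((1 - F a) * (- fd a) / (2 * f a ^ 2) <= x).
  { apply Rmult_le_reg_r with (2 * f a ^ 2); [nra|].
    replace ((1 - F a) * (- fd a) / (2 * f a ^ 2) * (2 * f a ^ 2))
      with ((1 - F a) * (- fd a)) by (field; lra). nra. }
  unfold p, beta in *. nra.
Qed.

Lemma qstar_bracket :
  exists r, qstar a beta (f a) (- fd a) p = Finite r /\ a <= r <= a + u.
Proof.
  assert (Hu : 0 < u) by (apply Rdiv_lt_0_compat; [|apply f_pos]; lra).
  apply Lub_Rbar_bracket.
  - destruct F_cdf as [Hmono [Hcont _]].
    assert (Hlevel : F a <= p <= F (a + u)).
    { split; [unfold p, beta; nra | apply cdf_ge_level]. }
    destruct (IVT_gen F a (a + u) p) as [q0 [Hq0 HFq0]].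
    + intros t. apply continuity_pt_filterlim, Hcont.
    + rewrite Rmin_left, Rmax_right; [lra | apply Hmono; lra | apply Hmono; lra].
    + rewrite Rmin_left, Rmax_right in Hq0 by lra.
      exists q0. split; [|lra]. rewrite <- HFq0.
      apply density_feasible; auto; lra.
  - intros q' Hq'. apply (feasible_le_threshold a beta (f a) (- fd a) x q'); auto.
Qed.

Lemma quantile_bracket : a <= quantile F p <= a + u.
Proof.
  destruct F_cdf as [Hmono _].
  apply Glb_Rbar_bracket; [apply cdf_ge_level|].
  intros y Hy. destruct (Rle_or_lt a y) as [|Hya]; [assumption|exfalso].
  set (m := (Rmax y z + a) / 2).
  assert (Hy_le := Rmax_l y z). assert (Hz_le := Rmax_r y z).
  assert (Rmax y z < a) by (apply Rmax_lub_lt; lra).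
  assert (F y <= F m) by (apply Hmono; unfold m; lra).
  assert (F m < F a) by (apply cdf_lt; unfold m; lra).
  assert (F a <= p) by (unfold p, beta; nra).
  lra.
Qed.

End Threshold.

End SmoothTail.

Lemma hazard_bounds beta eta d x : 1 / 2 < x <= 1 -> 0 < beta -> 0 < eta ->
  Rabs (beta * d / eta ^ 2 - -1) < x - 1 / 2 ->
  0 < - d /\ beta * (- d) < (x + 1 / 2) * eta ^ 2.
Proof.
  intros Hx Hb He Hk.
  apply Rabs_lt_between in Hk.
  assert (He2 : 0 < eta ^ 2) by (apply pow_lt; lra).
  assert (Hbd : beta * d = beta * d / eta ^ 2 * eta ^ 2) by (field; lra).
  split; [|nra].
  assert (beta * d < 0) by nra.
  destruct (Rlt_or_le d 0); [lra|].
  assert (0 <= beta * d) by (apply Rmult_le_pos; lra). lra.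
Qed.

Theorem theorem8 (F f fd : R -> R) (x : R) :
  is_continuous_cdf F ->
  (forall y, 0 <= f y) ->
  assumption_A1 F f fd ->
  in_MDA_Gumbel F ->
  assumption_A3 F f fd ->
  right_endpoint_infinite F ->
  1 / 2 < x <= 1 ->
  forall eps : R, 0 < eps ->
  exists M : R, forall a : R, M < a ->
    let beta := 1 - F a in
    let eta := f a in
    let nu := - fd a in
    let p := 1 - x * beta in
    let q := quantile F p in
    exists r : R, qstar a beta eta nu p = Finite r /\
      Rabs (r / q - 1) < eps.
Proof.
  intros HF _ [z [HdF [Hdf [Hpos [_ Hconv]]]]] _ HA3 Hend Hx eps Heps.
  destruct (mills_ratio_sublinear F f fd z HdF Hdf Hpos HA3 (eps / 2) ltac:(lra))
    as [M1 Hmills].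
  pose proof HA3 as Hhazard. apply is_lim_spec in Hhazard.
  destruct (Hhazard (mkposreal (x - 1 / 2) ltac:(lra))) as [M2 HM2].
  exists (Rmax (Rmax z 0) (Rmax M1 M2)). intros a Ha. cbv zeta.
  apply Rmax_Rlt in Ha as [[Hza Ha0]%Rmax_Rlt [HM1a HM2a]%Rmax_Rlt].
  assert (Hbeta : 0 < 1 - F a) by (specialize (Hend a); lra).
  destruct (hazard_bounds (1 - F a) (f a) (fd a) x Hx Hbeta (Hpos a Hza) (HM2 a HM2a))
    as [Hnu Hk].
  destruct (qstar_bracket F f fd z HdF Hdf Hpos Hconv HF x a Hx Hza Hbeta Hnu Hk)
    as [r [Hr Hra]].
  exists r. split; [exact Hr|].
  apply (ratio_near_one a ((1 - F a) / f a) r _ eps Ha0 Heps).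
  - exact (Hmills a HM1a).
  - exact Hra.
  - exact (quantile_bracket F f fd z HdF Hdf Hpos Hconv HF x a Hx Hza Hbeta Hk).
Qed.
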